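(* Let $\mathcal{Y}_c$ and $\mathcal{X}$ be the supports of an endogenous covariate $Y_c$ and an exogenous covariate vector $X$, with joint distribution $P_{Y_c,X}$ and marginal $P_X$. Consider the structural model $Y_o=\Lambda\big(f_{\theta_0}(Y_c,X)+\varepsilon\big)$ with $\mathbb{E}[\varepsilon\mid X]=0$, where $\Lambda$ is a known linear map and $\{f_\theta:\theta\in\Theta\}$ is a known family of real-valued functions on $\mathcal{Y}_c\times\mathcal{X}$. Let $\mathcal{F}$ be an eligible set of real-valued functions on $\mathcal{Y}_c\times\mathcal{X}$ (square-integrable under $P_{Y_c,X}$), and define \[ \mathcal{F}_\Theta:=\big\{(y_c,x)\mapsto f_\theta(y_c,x)+f(y_c,x)-\mathbb{E}[f(Y_c,X)\mid X=x]\ :\ \theta\in\Theta,\ f\in\mathcal{F}\big\}\subseteq\mathcal{F}. \] Suppose $\mathcal{F}_\Theta$ and $\mathcal{F}$ are linear spaces and let $d$ be the mean-squared distance on $\mathcal{F}$, $d(f,g)=\mathbb{E}_{P_{Y_c,X}}\big[(f(Y_c,X)-g(Y_c,X))^2\big]$, with $d(\mathcal{F}_\Theta,g):=\inf_{f\in\mathcal{F}_\Theta}d(f,g)$. Then for every $g\in\mathcal{F}$, \[ d(\mathcal{F}_\Theta,g)=\inf_{\theta\in\Theta}\overline{d}(\overline{f}_\theta,\overline{g}), \] where $\overline{f}_\theta(x):=\mathbb{E}[f_\theta(Y_c,X)\mid X=x]$, $\overline{g}(x):=\mathbb{E}[g(Y_c,X)\mid X=x]$, and $\overline{d}(\ov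erline{f},\overline{g}):=\mathbb{E}_{P_X}\big[(\overline{f}(X)-\overline{g}(X))^2\big]$.
   Context: Conditional expectations are with respect to the joint distribution of $(Y_c,X)$. The set $\mathcal{F}_\Theta$ represents all mappings consistent with the model (the nonparametric part $f-\mathbb{E}[f\mid X]$ encodes an unrestricted error satisfying only the conditional mean-zero restriction). *)

From HB Require Import structures.
From mathcomp Require Import all_boot all_order all_algebra.
From mathcomp Require Import all_classical all_reals all_analysis.
Set Implicit Arguments. Unset Strict Implicit. Unset Printing Implicit Defensive.
Import Order.TTheory GRing.Theory Num.Theory.
Local Open Scope classical_set_scope.
Local Open Scope ring_scope.

Section defs.
Context {R : realType} {d1 d2 : measure_display}
  {Yc : measurableType d1} {X : measurableType d2}.
Local Open Scope ereal_scope.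

Definition sq_integrable d (T : measurableType d)
  (mu : {measure set T -> \bar R}) (f : T -> R) : Prop :=
  measurable_fun setT f /\ mu.-integrable setT (fun z => ((f z) ^+ 2)%:E).

(* h is (a version of) E[f(Y_c,X) | X = .] : h is measurable and
   E[f 1_{X in A}] = E[h(X) 1_{X in A}] for every measurable A. *)
Definition is_cond_exp_X (P : probability (Yc * X)%type R)
  (f : Yc * X -> R) (h : X -> R) : Prop :=
  measurable_fun setT h /\
  P.-integrable setT (fun z => (h z.2)%:E) /\
  forall A : set X, measurable A ->
    \int[P]_(z in snd @^-1` A) (f z)%:E = \int[P]_(z in snd @^-1` A) (h z.2)%:E.

Definition msd d (T : measurableType d) (mu : {measure set T -> \bar R})
  (f g : T -> R) : \bar R :=
  \int[mu]_(z in setT) (((f z - g z) ^+ 2)%R)%:E.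

Definition msd_set d (T : measurableType d) (mu : {measure set T -> \bar R})
  (S : set (T -> R)) (g : T -> R) : \bar R :=
  ereal_inf [set msd mu f g | f in S].

Definition is_linear_space d (T : measurableType d) (S : set (T -> R)) : Prop :=
  S (fun _ => 0%R) /\
  (forall f g, S f -> S g -> S (fun z => f z + g z)%R) /\
  (forall (a : R) f, S f -> S (fun z => a * f z)%R).

Definition F_Theta (Theta : Type) (ftheta : Theta -> Yc * X -> R)
  (F : set (Yc * X -> R)) (ce : (Yc * X -> R) -> X -> R) : set (Yc * X -> R) :=
  [set h | exists theta f, F f /\
     h = (fun z => ftheta theta z + f z - ce f z.2)%R].

End defs.

From HB Require Import structures.
From mathcomp Require Import all_boot all_order all_algebra.
From mathcomp Require Import all_classical all_reals all_analysis.
From mathcomp Require Import finmap measurable_realfun ring lra.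
Set Implicit Arguments. Unset Strict Implicit. Unset Printing Implicit Defensive.
Import Order.TTheory GRing.Theory Num.Theory numFieldNormedType.Exports.
Import HBSimple HBNNSimple.
Local Open Scope classical_set_scope.
Local Open Scope ring_scope.

(* For [h = f_theta + f - E[f|X]] in [F_Theta], the residual [h - g] has
   conditional expectation [E[f_theta|X] - E[g|X]] given [X], and conditional
   expectation is an L^2 contraction, so [d(h, g) >= dbar(fbar_theta, gbar)].
   Conversely, [f := g - f_theta + E[0|X]] lies in [F], and then [h - g] is a
   function of [X] with the same conditional expectation, so the contraction
   gives the reverse inequality.  The contraction [E[w(X)^2] <= E[v^2]] for a
   version [w] of [E[v|X]] is obtained by testing the defining identity against
   simple functions [s_n(X)] with [s_n^2 <= w s_n] increasing to [w^2], and
   passing to the limit by monotone convergence. *)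

Section centered_given.
Context d dX (T : measurableType d) (X : measurableType dX) (R : realType)
  (mu : {measure set T -> \bar R}) (pi : T -> X) (mpi : measurable_fun setT pi).
Local Open Scope ereal_scope.

Let mpreimage (A : set X) : measurable A -> measurable (pi @^-1` A).
Proof. by move=> mA; rewrite -[X in measurable X]setTI; exact: mpi. Qed.

Let integrable_preimage (u : T -> \bar R) (A : set X) : measurable A ->
  mu.-integrable setT u -> mu.-integrable (pi @^-1` A) u.
Proof. by move=> mA; apply: integrableS; [|exact: mpreimage|]. Qed.

Definition centered_given (u : T -> R) :=
  mu.-integrable setT (EFin \o u) /\
  forall A, measurable A -> \int[mu]_(z in pi @^-1` A) (u z)%:E = 0.

Lemma centered_givenD (u1 u2 : T -> R) : centered_given u1 -> centered_given u2 ->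
  centered_given (fun z => u1 z + u2 z)%R.
Proof.
move=> [i1 c1] [i2 c2]; have eD : EFin \o (fun z => u1 z + u2 z)%R =
    (EFin \o u1) \+ (EFin \o u2) by apply/funext => z; rewrite /= EFinD.
split=> [|A mA]; first by rewrite eD; exact: integrableD.
under eq_integral => z _ do rewrite /= EFinD.
rewrite integralD ?c1 ?c2 ?adde0 //; first exact: mpreimage.
all: exact: integrable_preimage.
Qed.

Lemma centered_givenN (u : T -> R) : centered_given u ->
  centered_given (fun z => - u z)%R.
Proof.
move=> [i c]; have eN : EFin \o (fun z => - u z)%R = (fun z => (-1)%:E * (u z)%:E).
  by apply/funext => z; rewrite /= mulN1e.
split=> [|A mA]; first by rewrite eN; exact: integrableZl.
under eq_integral => z _ do rewrite /= EFinN -mulN1e.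
by rewrite integralZl ?c ?mule0 //; [exact: mpreimage|exact: integrable_preimage].
Qed.

Lemma centered_givenB (u1 u2 : T -> R) : centered_given u1 -> centered_given u2 ->
  centered_given (fun z => u1 z - u2 z)%R.
Proof. by move=> c1 c2; exact/(centered_givenD c1)/centered_givenN. Qed.

Lemma integrable_of_centered_given (v : T -> R) (w : X -> R) :
  mu.-integrable setT (EFin \o v) -> centered_given (fun z => v z - w (pi z))%R ->
  mu.-integrable setT (fun z => (w (pi z))%:E).
Proof.
move=> iv [ivw _].
have -> : (fun z => (w (pi z))%:E) =
    (EFin \o v) \- (EFin \o (fun z => v z - w (pi z))%R).
  by apply/funext => z; rewrite /= -EFinB opprB addrC subrK.
exact: integrableB.
Qed.

Lemma centered_givenP (v : T -> R) (w : X -> R) :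
  mu.-integrable setT (EFin \o v) -> mu.-integrable setT (fun z => (w (pi z))%:E) ->
  centered_given (fun z => v z - w (pi z))%R <->
  forall A, measurable A ->
    \int[mu]_(z in pi @^-1` A) (v z)%:E = \int[mu]_(z in pi @^-1` A) (w (pi z))%:E.
Proof.
move=> iv iw; have ivw : mu.-integrable setT (EFin \o (fun z => v z - w (pi z))%R).
  by rewrite (_ : EFin \o _ = (EFin \o v) \- (fun z => (w (pi z))%:E));
    [exact: integrableB|apply/funext => z; rewrite /= EFinB].
have intB A : measurable A -> \int[mu]_(z in pi @^-1` A) ((v z - w (pi z))%R)%:E =
    \int[mu]_(z in pi @^-1` A) (v z)%:E - \int[mu]_(z in pi @^-1` A) (w (pi z))%:E.
  move=> mA; under eq_integral do rewrite EFinB.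
  by rewrite integralB //; [exact: mpreimage|exact: integrable_preimage..].
have fin_w A : measurable A ->
    \int[mu]_(z in pi @^-1` A) (w (pi z))%:E \is a fin_num.
  move=> mA; apply: integrable_fin_num; first exact: mpreimage.
  exact: integrable_preimage.
split=> [[_ c] A mA|h]; last by split=> // A mA; rewrite intB // h // subee // fin_w.
by rewrite -[LHS](subeK _ (fin_w A mA)) -intB // c // add0r.
Qed.

Lemma integral_mul_indic_comp (u : T -> R) (A : set X) : measurable A ->
  mu.-integrable setT (EFin \o u) ->
  mu.-integrable setT (fun z => (u z * \1_A (pi z))%:E) /\
  \int[mu]_z (u z * \1_A (pi z))%:E = \int[mu]_(z in pi @^-1` A) (u z)%:E.
Proof.
move=> mA iu.
have eA : (fun z => (u z * \1_A (pi z))%:E) = (EFin \o u) \_ (pi @^-1` A).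
  apply/funext => z; rewrite patchE indicE.
  have -> : (z \in pi @^-1` A) = (pi z \in A) by [].
  by case: (pi z \in A); rewrite ?mulr1 ?mulr0.
rewrite eA -integral_mkcond; split => //.
by apply/(integrable_mkcond _ (mpreimage mA)).1/integrable_preimage.
Qed.

End centered_given.

Section sq_integrable.
Context d (T : measurableType d) (R : realType) (mu : {measure set T -> \bar R}).

Lemma sq_integrableD (f g : T -> R) : sq_integrable mu f -> sq_integrable mu g ->
  sq_integrable mu (fun z => f z + g z).
Proof.
move=> [mf if2] [mg ig2]; split; first exact: measurable_funD.
apply: (le_integrable measurableT _ _
  (integrableD measurableT (integrableZl measurableT 2 if2)
    (integrableZl measurableT 2 ig2))).
  by apply/measurable_EFinP/measurable_funX/measurable_funD.
move=> z _ /=; rewrite lee_fin.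
rewrite ger0_norm ?sqr_ge0 // ger0_norm; last first.
  by rewrite addr_ge0 // mulr_ge0 // sqr_ge0.
by have := sqr_ge0 (f z - g z); nra.
Qed.

Lemma sq_integrableN (f : T -> R) : sq_integrable mu f ->
  sq_integrable mu (fun z => - f z).
Proof.
move=> [mf if2]; split; first exact: measurable_funN.
by under eq_fun do rewrite sqrrN.
Qed.

Lemma sq_integrableB (f g : T -> R) : sq_integrable mu f -> sq_integrable mu g ->
  sq_integrable mu (fun z => f z - g z).
Proof. by move=> hf /sq_integrableN; exact: sq_integrableD. Qed.

End sq_integrable.

Lemma sq_integrable_integrable d (T : measurableType d) (R : realType)
  (mu : {finite_measure set T -> \bar R}) (f : T -> R) :
  sq_integrable mu f -> mu.-integrable setT (EFin \o f).
Proof.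
move=> [mf if2].
have i1 := finite_measure_integrable_cst mu 1 measurableT.
apply: (le_integrable measurableT _ _ (integrableD measurableT i1 if2)).
  exact/measurable_EFinP.
move=> z _ /=; rewrite lee_fin [X in _ <= X]ger0_norm ?addr_ge0 ?sqr_ge0 //.
by have [h|h] := leP 0 (f z); [rewrite ger0_norm|rewrite ltr0_norm]; nra.
Qed.

Section signed_parts.
Variable R : realDomainType.
Implicit Types x a b : R.

Lemma signed_parts_cases x a b :
  0 <= a <= Num.max x 0 -> 0 <= b <= Num.max (- x) 0 ->
  (0 <= x /\ b = 0 /\ a <= x) \/ (x <= 0 /\ a = 0 /\ b <= - x).
Proof.
move=> /andP[a0 ax] /andP[b0 bx]; have [x0|x0] := leP 0 x.
- rewrite (max_l x0) in ax; rewrite (max_r (_ : - x <= 0)) ?oppr_le0 // in bx.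
  by left; split=> //; split=> //; apply/le_anti; rewrite bx b0.
- have nx : 0 <= - x by rewrite oppr_ge0 ltW.
  rewrite (max_r (ltW x0)) in ax; rewrite (max_l nx) in bx.
  by right; split; [exact: ltW|split=> //; apply/le_anti; rewrite ax a0].
Qed.

Lemma signed_parts_sqr_le x a b :
  0 <= a <= Num.max x 0 -> 0 <= b <= Num.max (- x) 0 ->
  (a - b) ^+ 2 <= x * (a - b).
Proof. by move=> ha hb; case: (signed_parts_cases ha hb) => -[x0 [-> ?]]; nra. Qed.

Lemma signed_parts_mul_le x a b a' b' :
  0 <= a <= Num.max x 0 -> 0 <= b <= Num.max (- x) 0 ->
  0 <= a' <= Num.max x 0 -> 0 <= b' <= Num.max (- x) 0 ->
  a <= a' -> b <= b' -> x * (a - b) <= x * (a' - b').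
Proof.
move=> ha hb ha' hb' aa' bb'; move: (ha) (hb) => /andP[a0 _] /andP[b0 _].
by case: (signed_parts_cases ha hb) (signed_parts_cases ha' hb')
  => -[x0 [-> ?]] [[x0' [-> ?]]|[x0' [-> ?]]]; nra.
Qed.

End signed_parts.

Section cond_exp_contraction.
Context d dX (T : measurableType d) (X : measurableType dX) (R : realType)
  (mu : {finite_measure set T -> \bar R}) (pi : T -> X)
  (mpi : measurable_fun setT pi).
Variables (v : T -> R) (w : X -> R).
Hypotheses (hv : sq_integrable mu v) (mw : measurable_fun setT w)
  (hvw : centered_given mu pi (fun z => v z - w (pi z))).

Let iv : mu.-integrable setT (EFin \o v) := sq_integrable_integrable hv.
Let iw : mu.-integrable setT (fun z => (w (pi z))%:E) :=
  integrable_of_centered_given iv hvw.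
Let mwpi : measurable_fun setT (fun z => w (pi z)) := measurableT_comp mw mpi.

Definition equal_moment (s : X -> R) :=
  [/\ mu.-integrable setT (fun z => (v z * s (pi z))%:E),
      mu.-integrable setT (fun z => (w (pi z) * s (pi z))%:E) &
      (\int[mu]_z (v z * s (pi z))%:E = \int[mu]_z (w (pi z) * s (pi z))%:E)%E].

Lemma equal_moment0 : equal_moment 0.
Proof.
have e0 (u : T -> R) : (fun z => (u z * (0 : X -> R) (pi z))%:E) = cst 0%E.
  by apply/funext => z /=; rewrite mulr0.
by rewrite /equal_moment !e0; split=> //; exact: integrable0.
Qed.

Lemma equal_momentD s1 s2 : equal_moment s1 -> equal_moment s2 ->
  equal_moment (s1 + s2).
Proof.
move=> [iv1 iw1 e1] [iv2 iw2 e2].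
have eD (u : T -> R) : (fun z => (u z * (s1 + s2) (pi z))%:E) =
    ((fun z => (u z * s1 (pi z))%:E) \+ (fun z => (u z * s2 (pi z))%:E))%E.
  by apply/funext => z /=; rewrite mulrDr EFinD.
rewrite /equal_moment !eD; split; try exact: integrableD.
by rewrite !integralD // e1 e2.
Qed.

Lemma equal_momentZ c s : equal_moment s -> equal_moment (fun x => c * s x).
Proof.
move=> [ivs iws e].
have eZ (u : T -> R) : (fun z => (u z * (c * s (pi z)))%:E) =
    (fun z => c%:E * (u z * s (pi z))%:E)%E.
  by apply/funext => z /=; rewrite -EFinM mulrCA.
rewrite /equal_moment !eZ; split; try exact: integrableZl.
by rewrite !integralZl // e.
Qed.

Lemma equal_moment_indic A : measurable A -> equal_moment (\1_A).
Proof.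
move=> mA; rewrite /equal_moment.
have [ivA ->] := integral_mul_indic_comp mpi mA iv.
have [iwA ->] := integral_mul_indic_comp mpi mA iw.
by split=> //; exact: (centered_givenP mpi iv iw).1.
Qed.

Lemma equal_moment_sfun (s : {sfun X >-> R}) : equal_moment s.
Proof.
pose r := fset_set (range s).
have -> : (s : X -> R) =
    \sum_(i < #|` r |) (fun x => r`_i * \1_(s @^-1` [set r`_i]) x).
  by apply/funext => x; rewrite fimfunEord fct_sumE.
apply: (big_ind equal_moment equal_moment0 equal_momentD) => i _.
exact/equal_momentZ/equal_moment_indic/measurable_funPTI.
Qed.

Let fp := fun x => (w^\+ x)%:E.
Let fm := fun x => (w^\- x)%:E.
Let mfp : measurable_fun setT fp.
Proof. exact/measurable_EFinP/measurable_funrpos. Qed.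
Let mfm : measurable_fun setT fm.
Proof. exact/measurable_EFinP/measurable_funrneg. Qed.
Let fp0 x : setT x -> (0 <= fp x)%E. Proof. by rewrite lee_fin funrpos_ge0. Qed.
Let fm0 x : setT x -> (0 <= fm x)%E. Proof. by rewrite lee_fin funrneg_ge0. Qed.

Let a n := approx setT fp n.
Let b n := approx setT fm n.
Let s n x := a n x - b n x.

Let a_bnd n x : 0 <= a n x <= Num.max (w x) 0.
Proof.
rewrite /a -(nnsfun_approxE measurableT mfp) fun_ge0 /=.
by have := le_approx n fp0 (I : setT x); rewrite lee_fin nnsfun_approxE.
Qed.

Let b_bnd n x : 0 <= b n x <= Num.max (- w x) 0.
Proof.
rewrite /b -(nnsfun_approxE measurableT mfm) fun_ge0 /=.
by have := le_approx n fm0 (I : setT x); rewrite lee_fin nnsfun_approxE.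
Qed.

Let a_nd x : {homo a^~ x : n m / (n <= m)%N >-> n <= m}.
Proof. by move=> n m nm; have /lefP := nd_approx setT fp nm; apply. Qed.

Let b_nd x : {homo b^~ x : n m / (n <= m)%N >-> n <= m}.
Proof. by move=> n m nm; have /lefP := nd_approx setT fm nm; apply. Qed.

Let s_cvg x : s^~ x @ \oo --> w x.
Proof.
have -> : w x = w^\+ x - w^\- x by rewrite -{1}(funrposBneg w).
apply: cvgB.
  exact: (cvg_approx fp0 (I : setT x) (ltry _)).
exact: (cvg_approx fm0 (I : setT x) (ltry _)).
Qed.

Let equal_moment_s n : equal_moment (s n).
Proof.
have -> : s n = a n + (fun x => -1 * b n x).
  by apply/funext => x; rewrite /s !fctE mulN1r.
rewrite /a /b -(nnsfun_approxE measurableT mfp) -(nnsfun_approxE measurableT mfm).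
by apply: equal_momentD; [|apply: equal_momentZ]; exact: equal_moment_sfun.
Qed.

(* [2 v s <= v^2 + s^2 <= v^2 + w s] pointwise, and [E[v s] = E[w s]]. *)
Let moment_s_le n :
  (\int[mu]_z (w (pi z) * s n (pi z))%:E <= \int[mu]_z (v z ^+ 2)%:E)%E.
Proof.
have [ivs iws e] := equal_moment_s n.
have iv2 := hv.2.
have le2 : (\int[mu]_z (2%:E * (v z * s n (pi z))%:E) <=
           \int[mu]_z ((v z ^+ 2)%:E + (w (pi z) * s n (pi z))%:E))%E.
  apply: le_integral => //; [exact: integrableZl|exact: integrableD|].
  move=> z _; rewrite -EFinM -EFinD lee_fin.
  have := signed_parts_sqr_le (a_bnd n (pi z)) (b_bnd n (pi z)).
  have := sqr_ge0 (v z - s n (pi z)); rewrite /s; nra.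
rewrite integralZl // integralD // e in le2.
move: le2 (integrable_fin_num measurableT iws) (integrable_fin_num measurableT iv2).
move: (\int[mu]_z (w (pi z) * s n (pi z))%:E)%E (\int[mu]_z (v z ^+ 2)%:E)%E.
by move=> [m| |] [V| |] //=; rewrite -EFinM -EFinD !lee_fin => ? _ _; lra.
Qed.

Lemma cond_exp_sqr_le :
  (\int[mu]_z (w (pi z) ^+ 2)%:E <= \int[mu]_z (v z ^+ 2)%:E)%E.
Proof.
pose g n z := (w (pi z) * s n (pi z))%:E.
have mg n : measurable_fun setT (g n).
  apply/measurable_EFinP/measurable_funM => //.
  apply: measurableT_comp mpi; apply: measurable_funB.
    by rewrite /a -(nnsfun_approxE measurableT mfp).
  by rewrite /b -(nnsfun_approxE measurableT mfm).
have g0 n z : setT z -> (0 <= g n z)%E.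
  move=> _; rewrite lee_fin; apply: le_trans (sqr_ge0 _) _.
  exact: signed_parts_sqr_le (a_bnd n (pi z)) (b_bnd n (pi z)).
have g_nd z : setT z -> {homo g^~ z : n m / (n <= m)%N >-> (n <= m)%E}.
  move=> _ n m nm; rewrite lee_fin; apply: signed_parts_mul_le;
    by [exact: a_bnd|exact: b_bnd|exact: a_nd|exact: b_nd].
have g_cvg z : g^~ z @ \oo --> (w (pi z) ^+ 2)%:E.
  by apply: cvg_EFin; [exact: nearW|rewrite expr2; exact: cvgMr].
have mct := cvg_monotone_convergence (mu := mu) measurableT mg g0 g_nd.
rewrite (eq_integral (fun z => limn (g^~ z))); last first.
  by move=> z _; rewrite (cvg_lim (@ereal_hausdorff R) (g_cvg z)).
rewrite -(cvg_lim (@ereal_hausdorff R) mct).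
by apply: lime_le; [exact: cvgP mct|exact: nearW moment_s_le].
Qed.

Lemma sq_integrable_cond_exp : sq_integrable mu (fun z => w (pi z)).
Proof.
split=> //; apply/integrableP; split; first exact/measurable_EFinP/measurable_funX.
under eq_integral do rewrite abse_EFin ger0_norm ?sqr_ge0 //.
apply: le_lt_trans cond_exp_sqr_le _.
by case/fin_numPlt/andP: (integrable_fin_num measurableT hv.2).
Qed.

End cond_exp_contraction.

Lemma ge0_integral_image_measure d dX (T : measurableType d)
  (X : measurableType dX) (R : realType) (mu : {measure set T -> \bar R})
  (nu : {measure set X -> \bar R}) (pi : T -> X) (mpi : measurable_fun setT pi)
  (hnu : forall A, measurable A -> nu A = mu (pi @^-1` A))
  (phi : X -> R) : measurable_fun setT phi -> (forall x, 0 <= phi x) ->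
  (\int[nu]_x (phi x)%:E = \int[mu]_z (phi (pi z))%:E)%E.
Proof.
move=> mphi phi0; rewrite (eq_measure_integral (pushforward mu pi)); last first.
  by move=> A mA _; exact: hnu.
rewrite ge0_integral_pushforward //; first exact/measurable_EFinP.
by move=> x _; rewrite lee_fin.
Qed.

Section projection_onto_F_Theta.
Context (R : realType) d1 d2 (Yc : measurableType d1) (X : measurableType d2)
  (P : probability (Yc * X)%type R) (PX : probability X R)
  (ce : (Yc * X -> R) -> X -> R).
Hypotheses (hPX : forall A : set X, measurable A -> PX A = P (snd @^-1` A))
  (hce : forall f, sq_integrable P f -> is_cond_exp_X P f (ce f)).

Lemma centered_given_ce f : sq_integrable P f ->
  centered_given P snd (fun z => f z - ce f z.2).
Proof.
move=> hf; have [_ [ice ce_int]] := hce hf.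
exact/(centered_givenP measurable_snd (sq_integrable_integrable hf) ice).
Qed.

Lemma sq_integrable_ce f : sq_integrable P f -> sq_integrable P (fun z => ce f z.2).
Proof.
move=> hf; have [mce _] := hce hf.
exact: (sq_integrable_cond_exp (mu := P) measurable_snd hf mce
  (centered_given_ce hf)).
Qed.

Lemma msd_ce_image f g : sq_integrable P f -> sq_integrable P g ->
  msd PX (ce f) (ce g) = (\int[P]_z ((ce f z.2 - ce g z.2) ^+ 2)%:E)%E.
Proof.
move=> hf hg; rewrite /msd (ge0_integral_image_measure measurable_snd hPX) //.
  by apply/measurable_funX/measurable_funB; [exact: (hce hf).1|exact: (hce hg).1].
by move=> x; exact: sqr_ge0.
Qed.

Variables (Theta : Type) (ftheta : Theta -> Yc * X -> R) (F : set (Yc * X -> R)).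
Hypotheses (hF_L2 : forall f, F f -> sq_integrable P f)
  (hFTheta_sub : F_Theta ftheta F ce `<=` F) (hF_lin : is_linear_space F).

(* [ce] picks an arbitrary version, so [ce 0] need not vanish. *)
Let c0 := ce (fun _ => 0).

Lemma F_ftheta_ce0 th : F (fun z => ftheta th z + 0 - c0 z.2).
Proof.
by apply: hFTheta_sub; exists th, (fun _ => 0); split=> //; case: hF_lin.
Qed.

Lemma sq_integrable_ftheta th : sq_integrable P (ftheta th).
Proof.
have -> : ftheta th = (fun z => (ftheta th z + 0 - c0 z.2) + c0 z.2).
  by apply/funext => z; rewrite addr0 subrK.
exact: sq_integrableD (hF_L2 (F_ftheta_ce0 th)) (sq_integrable_ce (hF_L2 hF_lin.1)).
Qed.

Lemma msd_ce_le_F_Theta th f g : F f -> F g ->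
  (msd PX (ce (ftheta th)) (ce g) <=
   msd P (fun z => ftheta th z + f z - ce f z.2)%R g)%E.
Proof.
move=> /hF_L2 hf /hF_L2 hg; have hth := sq_integrable_ftheta th.
rewrite msd_ce_image // /msd.
have hc : centered_given P snd (fun z =>
    (ftheta th z + f z - ce f z.2 - g z) - (ce (ftheta th) z.2 - ce g z.2)).
  rewrite (_ : (fun z => _ : R) = fun z => ((ftheta th z - ce (ftheta th) z.2) +
      (f z - ce f z.2)) - (g z - ce g z.2)); last by apply/funext => z; ring.
  apply: (centered_givenB measurable_snd); last exact: centered_given_ce.
  by apply: (centered_givenD measurable_snd); exact: centered_given_ce.
have hv : sq_integrable P (fun z => ftheta th z + f z - ce f z.2 - g z).
  exact/sq_integrableB/hg/sq_integrableB/(sq_integrable_ce hf)/sq_integrableD.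
have mw : measurable_fun setT (fun x => ce (ftheta th) x - ce g x).
  by apply: measurable_funB; [exact: (hce hth).1|exact: (hce hg).1].
exact: (cond_exp_sqr_le measurable_snd hv mw hc).
Qed.

Lemma exists_F_Theta_msd_le th g : F g ->
  exists2 h, F_Theta ftheta F ce h &
    (msd P h g <= msd PX (ce (ftheta th)) (ce g))%E.
Proof.
move=> Fg; have [_ [FD FZ]] := hF_lin.
pose f z := g z + -1 * (ftheta th z + 0 - c0 z.2).
have Ff : F f by apply: FD => //; apply: FZ; exact: F_ftheta_ce0.
exists (fun z => ftheta th z + f z - ce f z.2); first by exists th, f.
have [[hf hg] hth] := (hF_L2 Ff, hF_L2 Fg, sq_integrable_ftheta th).
rewrite msd_ce_image // /msd.
rewrite (eq_integral (fun z => ((c0 z.2 - ce f z.2) ^+ 2)%:E)); last first.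
  by move=> z _; rewrite /f; congr (_ ^+ 2)%:E; ring.
have hc : centered_given P snd (fun z =>
    (ce (ftheta th) z.2 - ce g z.2) - (c0 z.2 - ce f z.2)).
  rewrite (_ : (fun z => _ : R) = fun z => ((g z - ce g z.2) -
      (ftheta th z - ce (ftheta th) z.2)) - (f z - ce f z.2)); last first.
    by apply/funext => z; rewrite /f; ring.
  apply: (centered_givenB measurable_snd); last exact: centered_given_ce.
  by apply: (centered_givenB measurable_snd); exact: centered_given_ce.
have hv := sq_integrableB (sq_integrable_ce hth) (sq_integrable_ce hg).
have mw : measurable_fun setT (fun x => c0 x - ce f x).
  by apply: measurable_funB; [exact: (hce (hF_L2 hF_lin.1)).1|exact: (hce hf).1].
exact: (cond_exp_sqr_le measurable_snd hv mw hc).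
Qed.

End projection_onto_F_Theta.

Unset Implicit Arguments.

Theorem proposition1 (R : realType) (d1 d2 : measure_display)
  (Yc : measurableType d1) (X : measurableType d2)
  (P : probability (Yc * X)%type R)
  (PX : probability X R)
  (hPX : forall A : set X, measurable A -> PX A = P (snd @^-1` A))
  (ce : (Yc * X -> R) -> X -> R)
  (hce : forall f, sq_integrable P f -> is_cond_exp_X P f (ce f))
  (Theta : Type) (ftheta : Theta -> Yc * X -> R)
  (F : set (Yc * X -> R))
  (hF_L2 : forall f, F f -> sq_integrable P f)
  (hFTheta_sub : F_Theta ftheta F ce `<=` F)
  (hF_lin : is_linear_space F)
  (hFTheta_lin : is_linear_space (F_Theta ftheta F ce)) :
  forall g, F g ->
    msd_set P (F_Theta ftheta F ce) g =
    ereal_inf [set msd PX (ce (ftheta theta)) (ce g) | theta in [set: Theta]].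
Proof.
move=> g Fg; apply/eqP; rewrite eq_le; apply/andP; split.
- apply: le_ereal_inf_tmp => _ [th _ <-].
  have [h Fh le_hg] := exists_F_Theta_msd_le hPX hce hF_L2 hFTheta_sub hF_lin th Fg.
  by apply: ge_ereal_inf; exists (msd P h g) => //; exists h.
- apply: le_ereal_inf_tmp => _ [_ [th [f [Ff ->]]] <-].
  apply: ge_ereal_inf; exists (msd PX (ce (ftheta th)) (ce g)); first by exists th.
  exact: (msd_ce_le_F_Theta hPX hce hF_L2 hFTheta_sub hF_lin th Ff Fg).
Qed.
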